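(* Let $b$ be a prime, $m$ a positive integer, $N=b^m$, and $w\ge0$ an integer. For $k\in\mathbb{Z}$ let $$T_{N,w}(k)=\sum_{z\in\mathcal{Z}_{N,w}}\ \sum_{\substack{-N/2<h\le N/2\\ h\ne0}}\frac{e^{2\pi i h k b^{w} z/N}}{|h|}.$$ Then $$\sum_{k=1}^{N-1}\frac{|T_{N,w}(k)|}{|\mathcal{Z}_{N,w}|}\le 2b^{\min\{w,m\}}S_N.$$
   Context: $\mathcal{Z}_{N,w}=\{z\in\{1,\dots,b^{m-w}-1\}:\gcd(z,b^m)=1\}$ if $w<m$, and $\mathcal{Z}_{N,w}=\{1\}$ if $w\ge m$. $S_N=\sum_{-N/2<h\le N/2,\,h\ne0}\frac{1}{|h|}$. *)

From Stdlib Require Import Reals ZArith List Znumtheory Lia.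
From Coquelicot Require Import Coquelicot.
Import ListNotations.
Open Scope R_scope.

Definition lsumC (l : list Z) (f : Z -> C) : C :=
  fold_right (fun x acc => Cplus (f x) acc) (RtoC 0) l.
Definition lsumR (l : list Z) (f : Z -> R) : R :=
  fold_right (fun x acc => f x + acc) 0 l.

Definition Zrange (a b : Z) : list Z :=
  map (fun k => (a + Z.of_nat k)%Z) (seq 0 (Z.to_nat (b - a + 1))).

Definition cexp (t : R) : C := (cos t, sin t).

Definition Zset (b m w : nat) : list Z :=
  if (w <? m)%nat then
    filter (fun z => Z.eqb (Z.gcd z (Z.of_nat (b ^ m))) 1)
           (Zrange 1 (Z.of_nat (b ^ (m - w)) - 1))
  else [1%Z].

Definition Hset (N : Z) : list Z :=
  filter (fun h => andb (Z.ltb (- N) (2 * h)) (andb (Z.leb (2 * h) N) (negb (Z.eqb h 0))))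
         (Zrange (- N) N).

Definition S_N (N : Z) : R := lsumR (Hset N) (fun h => / IZR (Z.abs h)).

Definition T (b m w : nat) (k : Z) : C :=
  let N := Z.of_nat (b ^ m) in
  lsumC (Zset b m w) (fun z =>
    lsumC (Hset N) (fun h =>
      Cmult (cexp (2 * PI * IZR (h * k * Z.of_nat (b ^ w) * z) / IZR N))
            (RtoC (/ IZR (Z.abs h))))).

From Stdlib Require Import Reals ZArith List Znumtheory.
From Coquelicot Require Import Coquelicot.
From Stdlib Require Import Lia Lra Zpow_facts.
Import ListNotations.
Open Scope R_scope.

(* Write N = b^m, M = b^(m-w) and M' = M / b.  For w < m the sum over z is Ramanujan's sum
   c_M(n) = M [M | n] - M' [M' | n], so T(k) = sum_h c_M(h k) / |h| is real and
   |Z_{N,w}| = c_M(0) = M - M'.  At multiples of M, T(k) = (M - M') S_N.  Otherwise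
   gcd(M, k) = gcd(M', k) =: g, and with d = M' / g one gets T(k) = M' (b C(b d) - C(d)) <= 0,
   where C(d) is the part of S_N carried by the multiples of d, and b C(b d) <= C(d) because
   substituting h = d y turns d C(d) into a harmonic sum over a range shrinking with d.
   Hence sum_k |T(k)| = 2 sum_{M | k} T(k) - sum_k T(k) <= 2 b^w (M - M') S_N, since summing
   the exponentials over a full period shows sum_{k=1}^N T(k) >= 0.  For w >= m, Z_{N,w} = {1}
   and T(k) = S_N for every k. *)

Section FiniteSums.

Context {A : Type}.

Definition fsum {G : AbelianMonoid} (l : list A) (f : A -> G) : G :=
  fold_right (fun x acc => plus (f x) acc) zero l.

Lemma fsum_app {G : AbelianMonoid} (l1 l2 : list A) (f : A -> G) :
  fsum (l1 ++ l2) f = plus (fsum l1 f) (fsum l2 f).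
Proof.
  induction l1 as [|x l1 IH]; simpl; [now rewrite plus_zero_l|].
  now rewrite IH, plus_assoc.
Qed.

Lemma fsum_ext {G : AbelianMonoid} (l : list A) (f g : A -> G) :
  (forall x, In x l -> f x = g x) -> fsum l f = fsum l g.
Proof.
  induction l as [|x l IH]; intros H; simpl; auto.
  rewrite (H x (or_introl eq_refl)), IH; auto. intros y Hy; apply H; now right.
Qed.

Lemma fsum_zero {G : AbelianMonoid} (l : list A) (f : A -> G) :
  (forall x, In x l -> f x = zero) -> fsum l f = zero.
Proof.
  intros H. rewrite (fsum_ext l f (fun _ => zero) H). clear H.
  induction l as [|x l IH]; simpl; [reflexivity|]. now rewrite IH, plus_zero_l.
Qed.

Lemma fsum_plus {G : AbelianMonoid} (l : list A) (f g : A -> G) :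
  fsum l (fun x => plus (f x) (g x)) = plus (fsum l f) (fsum l g).
Proof.
  induction l as [|x l IH]; simpl; [now rewrite plus_zero_l|].
  rewrite IH, !plus_assoc. f_equal.
  rewrite <- !plus_assoc. f_equal. apply plus_comm.
Qed.

Lemma fsum_minus {G : AbelianGroup} (l : list A) (f g : A -> G) :
  fsum l (fun x => minus (f x) (g x)) = minus (fsum l f) (fsum l g).
Proof.
  unfold minus. rewrite fsum_plus. f_equal.
  induction l as [|x l IH]; simpl; [symmetry; apply opp_zero|].
  rewrite IH. symmetry. apply opp_plus.
Qed.

Lemma fsum_mult_l {K : Ring} (l : list A) (c : K) (f : A -> K) :
  fsum l (fun x => mult c (f x)) = mult c (fsum l f).
Proof.
  induction l as [|x l IH]; simpl; [now rewrite mult_zero_r|].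
  now rewrite IH, mult_distr_l.
Qed.

Lemma fsum_mult_r {K : Ring} (l : list A) (c : K) (f : A -> K) :
  fsum l (fun x => mult (f x) c) = mult (fsum l f) c.
Proof.
  induction l as [|x l IH]; simpl; [now rewrite mult_zero_l|].
  now rewrite IH, mult_distr_r.
Qed.

Lemma fsum_filter {G : AbelianMonoid} (p : A -> bool) (l : list A) (f : A -> G) :
  fsum (filter p l) f = fsum l (fun x => if p x then f x else zero).
Proof.
  induction l as [|x l IH]; simpl; auto.
  destruct (p x); simpl; rewrite IH; auto. now rewrite plus_zero_l.
Qed.

Lemma fsum_le (l : list A) (f g : A -> R) :
  (forall x, In x l -> f x <= g x) -> fsum l f <= fsum l g.
Proof.
  induction l as [|x l IH]; intros H; simpl; [lra|].
  apply Rplus_le_compat; [apply H; now left|].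
  apply IH. intros y Hy. apply H. now right.
Qed.

Lemma fsum_nonneg (l : list A) (f : A -> R) :
  (forall x, In x l -> 0 <= f x) -> 0 <= fsum l f.
Proof.
  intros H. apply Rle_trans with (fsum l (fun _ => 0)).
  - right. symmetry. now apply (fsum_zero (G := R_AbelianMonoid)).
  - now apply fsum_le.
Qed.

Lemma fsum_const (l : list A) (c : R) : fsum l (fun _ => c) = INR (length l) * c.
Proof.
  induction l as [|x l IH]; simpl length.
  - change (0 = 0 * c). ring.
  - rewrite S_INR. change (c + fsum l (fun _ => c) = (INR (length l) + 1) * c).
    rewrite IH. ring.
Qed.

Lemma fsum_RtoC (l : list A) (f : A -> R) : fsum l (fun x => RtoC (f x)) = RtoC (fsum l f).
Proof.
  induction l as [|x l IH]; simpl; [reflexivity|]. now rewrite IH, RtoC_plus.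
Qed.

(* Restatements with the concrete operations of [R] and [C]: [rewrite] then matches [Rplus],
   [Rmult], ..., and the goals produced are plain real equations that [ring] and [field] accept. *)
Lemma fsum_Rext (l : list A) (f g : A -> R) :
  (forall x, In x l -> f x = g x) -> fsum l f = fsum l g.
Proof. exact (fsum_ext l f g). Qed.

Lemma fsum_Rminus (l : list A) (f g : A -> R) :
  fsum l (fun x => f x - g x) = fsum l f - fsum l g.
Proof. exact (fsum_minus (G := R_AbelianGroup) l f g). Qed.

Lemma fsum_Rmult_l (l : list A) (c : R) (f : A -> R) :
  fsum l (fun x => c * f x) = c * fsum l f.
Proof. exact (fsum_mult_l (K := R_Ring) l c f). Qed.

Lemma fsum_Cmult_r (l : list A) (c : C) (f : A -> C) :
  fsum l (fun x => (f x * c)%C) = (fsum l f * c)%C.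
Proof. exact (fsum_mult_r (K := C_Ring) l c f). Qed.

End FiniteSums.

Lemma fsum_map {G : AbelianMonoid} {A B : Type} (g : A -> B) (l : list A) (f : B -> G) :
  fsum (map g l) f = fsum l (fun x => f (g x)).
Proof. induction l as [|x l IH]; simpl; now rewrite ?IH. Qed.

Lemma fsum_swap {G : AbelianMonoid} {A B : Type} (l1 : list A) (l2 : list B) (f : A -> B -> G) :
  fsum l1 (fun x => fsum l2 (f x)) = fsum l2 (fun y => fsum l1 (fun x => f x y)).
Proof.
  induction l1 as [|x l1 IH]; simpl.
  - symmetry. now apply fsum_zero.
  - rewrite IH. symmetry. apply (fsum_plus l2 (f x)).
Qed.

Lemma fsum_seq1_succ {G : AbelianMonoid} (n : nat) (f : nat -> G) :
  fsum (seq 1 (S n)) f = plus (fsum (seq 1 n) f) (f (S n)).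
Proof. rewrite seq_S, fsum_app. simpl. now rewrite plus_zero_r. Qed.

Lemma fsum_seq1_extend {G : AbelianMonoid} (n n' : nat) (f : nat -> G) :
  (n <= n')%nat -> (forall i, (n < i <= n')%nat -> f i = zero) ->
  fsum (seq 1 n') f = fsum (seq 1 n) f.
Proof.
  intros Hn Hf. replace n' with (n + (n' - n))%nat by lia.
  rewrite seq_app, fsum_app, (fsum_zero (seq (1 + n) _)), plus_zero_r; [reflexivity|].
  intros i Hi. apply in_seq in Hi. apply Hf. lia.
Qed.

Lemma fsum_seq1_multiples {G : AbelianMonoid} (d q : nat) (f : nat -> G) : (0 < d)%nat ->
  fsum (seq 1 (d * q))
    (fun i => if Zdivide_dec (Z.of_nat d) (Z.of_nat i) then f i else zero)
  = fsum (seq 1 q) (fun y => f (d * y)%nat).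
Proof.
  intros Hd. induction q as [|q IH]; [now rewrite Nat.mul_0_r|].
  destruct d as [|d]; [lia|].
  replace (S d * S q)%nat with (S d * q + d + 1)%nat by lia.
  rewrite !seq_app, !fsum_app, IH, fsum_seq1_succ, <- plus_assoc. f_equal.
  rewrite (fsum_zero (seq _ d)), plus_zero_l.
  - simpl. rewrite plus_zero_r.
    destruct (Zdivide_dec _ _) as [_|Hnd]; [f_equal; lia|].
    exfalso. apply Hnd. exists (Z.of_nat (S q)). lia.
  - intros i Hi. apply in_seq in Hi.
    destruct (Zdivide_dec _ _) as [Hdi|]; [exfalso|reflexivity].
    assert (Hr : (Z.of_nat (S d) | Z.of_nat i - Z.of_nat (S d * q))%Z).
    { apply Z.divide_sub_r; [exact Hdi|]. exists (Z.of_nat q). lia. }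
    apply Z.divide_pos_le in Hr; lia.
Qed.

Lemma Zrange_1 (n : nat) : Zrange 1 (Z.of_nat n) = map Z.of_nat (seq 1 n).
Proof.
  unfold Zrange. replace (Z.to_nat (Z.of_nat n - 1 + 1)) with n by lia.
  rewrite <- seq_shift, !map_map. apply map_ext. intros. lia.
Qed.

Lemma Zrange_widen (a b : Z) : (a <= b + 1)%Z ->
  Zrange (a - 1) (b + 1) = (a - 1)%Z :: Zrange a b ++ [(b + 1)%Z].
Proof.
  intros H. unfold Zrange.
  replace (Z.to_nat (b + 1 - (a - 1) + 1)) with (S (S (Z.to_nat (b - a + 1)))) by lia.
  change (seq 0 (S (S ?k))) with (0%nat :: seq 1 (S k)).
  rewrite seq_S, <- seq_shift, map_cons, map_app, map_map. simpl. f_equal; [lia|].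
  f_equal; [apply map_ext; intros; lia | f_equal; lia].
Qed.

Lemma fsum_Zrange_sym (n : nat) (f : Z -> R) :
  fsum (Zrange (- Z.of_nat n) (Z.of_nat n)) f
  = f 0%Z + fsum (seq 1 n) (fun i => f (Z.of_nat i) + f (- Z.of_nat i)%Z).
Proof.
  induction n as [|n IH].
  - reflexivity.
  - replace (- Z.of_nat (S n))%Z with (- Z.of_nat n - 1)%Z by lia.
    replace (Z.of_nat (S n)) with (Z.of_nat n + 1)%Z by lia.
    rewrite Zrange_widen by lia.
    change (fsum (?x :: ?l) f) with (f x + fsum l f).
    rewrite (fsum_app (G := R_AbelianMonoid)), (fsum_seq1_succ (G := R_AbelianMonoid)), IH.
    change (fsum [?y] f) with (f y + 0).
    change (@plus R_AbelianMonoid ?a ?b) with (a + b).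
    replace (- Z.of_nat (S n))%Z with (- Z.of_nat n - 1)%Z by lia.
    replace (Z.of_nat (S n)) with (Z.of_nat n + 1)%Z by lia. lra.
Qed.

Lemma cexp_add (s t : R) : Cmult (cexp s) (cexp t) = cexp (s + t).
Proof. unfold cexp, Cmult; simpl. rewrite cos_plus, sin_plus. f_equal; ring. Qed.

Lemma cexp_2PI_int (z : Z) : cexp (2 * PI * IZR z) = 1.
Proof.
  assert (Hs : sin (PI * IZR z) = 0) by (apply sin_eq_0_1; exists z; ring).
  unfold cexp. replace (2 * PI * IZR z) with (2 * (PI * IZR z)) by ring.
  rewrite cos_2a_sin, sin_2a, Hs. unfold RtoC. f_equal; ring.
Qed.

Lemma cexp_eq_1 (t : R) : cexp t = 1 -> exists k : Z, t = 2 * PI * IZR k.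
Proof.
  intros H. unfold cexp, RtoC in H. injection H as Hcos _.
  replace t with (2 * (t / 2)) in Hcos |- * by field.
  rewrite cos_2a_sin in Hcos.
  assert (Hs : sin (t / 2) = 0) by nra.
  apply sin_eq_0_0 in Hs as [k Hk]. exists k. rewrite Hk. ring.
Qed.

Lemma cexp_geometric (t : R) (n : nat) :
  ((cexp t - 1) * fsum (seq 1 n) (fun k => cexp (t * INR k)))%C
  = (cexp (t * INR (S n)) - cexp t)%C.
Proof.
  induction n as [|n IH].
  - change ((cexp t - 1) * 0 = cexp (t * 1) - cexp t)%C.
    rewrite Rmult_1_r. ring.
  - rewrite (fsum_seq1_succ (G := C_AbelianMonoid)).
    change ((cexp t - 1) * (fsum (seq 1 n) (fun k => cexp (t * INR k)) + cexp (t * INR (S n)))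
            = cexp (t * INR (S (S n))) - cexp t)%C.
    rewrite Cmult_plus_distr_l, IH.
    replace (cexp (t * INR (S (S n)))) with (Cmult (cexp t) (cexp (t * INR (S n)))).
    + ring.
    + rewrite cexp_add. f_equal. rewrite (S_INR (S n)). ring.
Qed.

Lemma sum_roots_of_unity (L : Z) (D : nat) (n : Z) : (0 < L)%Z -> (L | Z.of_nat D)%Z ->
  fsum (seq 1 D) (fun k => cexp (2 * PI * IZR (n * Z.of_nat k) / IZR L))
  = if Zdivide_dec L n then RtoC (INR D) else RtoC 0.
Proof.
  intros HL [q Hq]. assert (HLr : IZR L <> 0) by (apply not_0_IZR; lia).
  set (t := 2 * PI * IZR n / IZR L).
  rewrite (fsum_ext _ _ (fun k => cexp (t * INR k))).
  2:{ intros k _. unfold t. rewrite INR_IZR_INZ, mult_IZR. f_equal. field. exact HLr. }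
  destruct (Zdivide_dec L n) as [[c Hc]|Hnd].
  - rewrite (fsum_ext _ _ (fun _ => RtoC 1)).
    + rewrite fsum_RtoC, fsum_const, length_seq. f_equal. ring.
    + intros k _. rewrite <- (cexp_2PI_int (c * Z.of_nat k)). f_equal.
      unfold t. rewrite INR_IZR_INZ, Hc, !mult_IZR. field. exact HLr.
  - assert (Hw : (cexp t - 1)%C <> 0).
    { intros Hw. apply Hnd. destruct (cexp_eq_1 t) as [k Hk].
      { rewrite <- (Cplus_0_l 1), <- Hw. ring. }
      exists k. apply eq_IZR. rewrite mult_IZR.
      apply (Rmult_eq_reg_l (2 * PI / IZR L)).
      - transitivity t; [unfold t; field; exact HLr|]. rewrite Hk. field. exact HLr.
      - generalize PI_RGT_0. intros. apply Rmult_integral_contrapositive. split.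
        + lra.
        + now apply Rinv_neq_0_compat. }
    set (S := fsum (seq 1 D) (fun k => cexp (t * INR k))).
    assert (HS : ((cexp t - 1) * S)%C = 0%C).
    { unfold S. rewrite cexp_geometric, S_INR, Rmult_plus_distr_l, Rmult_1_r, <- cexp_add.
      replace (cexp (t * INR D)) with (RtoC 1); [ring|].
      rewrite <- (cexp_2PI_int (n * q)). f_equal.
      unfold t. rewrite INR_IZR_INZ, Hq, !mult_IZR. field. exact HLr. }
    replace S with (/ (cexp t - 1) * ((cexp t - 1) * S))%C by (field; exact Hw).
    rewrite HS. apply Cmult_0_r.
Qed.

Section NumberTheory.
Local Open Scope Z_scope.

Lemma gcd_prime_pow_eq_1 (p z n : Z) : prime p -> 0 < n ->
  Z.gcd z (p ^ n) = 1 <-> ~ (p | z).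
Proof.
  intros Hp Hn. assert (H2 := prime_ge_2 _ Hp). split.
  - intros H Hpz. assert (Hg : (p | Z.gcd z (p ^ n))).
    { apply Z.gcd_greatest; [exact Hpz|]. now apply Zpower_divide. }
    rewrite H in Hg. apply Z.divide_1_r in Hg. lia.
  - intros Hpz. apply Zgcd_1_rel_prime, rel_prime_Zpower_r; [lia|].
    apply rel_prime_sym. now apply prime_rel_prime.
Qed.

Lemma gcd_prime_pow_succ (p j k : Z) : prime p -> 0 <= j -> ~ (p ^ (j + 1) | k) ->
  Z.gcd (p ^ (j + 1)) k = Z.gcd (p ^ j) k.
Proof.
  intros Hp Hj Hk. assert (H2 := prime_ge_2 _ Hp).
  assert (Hpos : 0 < p ^ (j + 1)) by (apply Z.pow_pos_nonneg; lia).
  set (g := Z.gcd (p ^ (j + 1)) k).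
  assert (Hgp : (g | p ^ (j + 1))) by apply Z.gcd_divide_l.
  assert (Hgk : (g | k)) by apply Z.gcd_divide_r.
  assert (Hg0 : 0 < g).
  { assert (0 <= g) by apply Z.gcd_nonneg.
    enough (g <> 0) by lia. intros E. apply Z.gcd_eq_0_l in E. lia. }
  destruct (Zdivide_power_2 g p (j + 1)) as [t Ht]; try lia; auto.
  assert (Ht0 : 0 <= t) by (destruct (Z.neg_nonneg_cases t); [rewrite Z.pow_neg_r in Ht|]; lia).
  assert (Htj : t <= j).
  { assert (g <= p ^ (j + 1)) by now apply Z.divide_pos_le.
    assert (g <> p ^ (j + 1)) by (intros E; apply Hk; now rewrite <- E).
    assert (t < j + 1) by (apply (Z.pow_lt_mono_r_iff p); lia). lia. }
  apply Z.divide_antisym_nonneg; try apply Z.gcd_nonneg; apply Z.gcd_greatest.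
  - rewrite Ht. exists (p ^ (j - t)). rewrite <- Z.pow_add_r by lia. f_equal. lia.
  - exact Hgk.
  - apply (Z.divide_trans _ (p ^ j)); [apply Z.gcd_divide_l|].
    exists p. rewrite Z.pow_add_r, Z.pow_1_r by lia. ring.
  - apply Z.gcd_divide_r.
Qed.

Lemma divide_mul_iff_div_gcd (d h k : Z) : 0 < d -> (d | h * k) <-> (d / Z.gcd d k | h).
Proof.
  intros Hd. set (g := Z.gcd d k).
  assert (Hg0 : 0 < g).
  { assert (0 <= g) by apply Z.gcd_nonneg.
    enough (g <> 0) by lia. intros E. apply Z.gcd_eq_0_l in E. lia. }
  destruct (Z.gcd_divide_l d k) as [d' Ed]. destruct (Z.gcd_divide_r d k) as [k' Ek].
  fold g in Ed, Ek. rewrite Ed at 2. rewrite Z.div_mul by lia.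
  assert (Hc : Z.gcd d' k' = 1).
  { apply (Z.mul_cancel_r _ _ g); [lia|].
    rewrite Z.mul_1_l, Z.mul_comm, <- Z.gcd_mul_mono_l_nonneg by lia.
    rewrite (Z.mul_comm g d'), (Z.mul_comm g k'), <- Ed, <- Ek. reflexivity. }
  rewrite Ed, Ek. replace (h * (k' * g)) with ((h * k') * g) by ring. split.
  - intros H. apply Z.mul_divide_cancel_r in H; [|lia].
    apply (Z.gauss _ k'); [now rewrite Z.mul_comm | exact Hc].
  - intros H. apply Z.mul_divide_mono_r. now apply Z.divide_mul_l.
Qed.

Lemma divide_mul_prime_pow (p j k : Z) : prime p -> 0 <= j -> ~ (p ^ (j + 1) | k) ->
  exists d, 0 < d /\ (forall h, (p ^ (j + 1) | h * k) <-> (p * d | h))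
                 /\ (forall h, (p ^ j | h * k) <-> (d | h)).
Proof.
  intros Hp Hj Hk. assert (H2 := prime_ge_2 _ Hp).
  assert (Hpj : 0 < p ^ j) by (apply Z.pow_pos_nonneg; lia).
  assert (Hpj1 : p ^ (j + 1) = p * p ^ j) by (rewrite Z.pow_add_r, Z.pow_1_r by lia; ring).
  assert (Hg : Z.gcd (p ^ (j + 1)) k = Z.gcd (p ^ j) k) by now apply gcd_prime_pow_succ.
  set (g := Z.gcd (p ^ j) k) in Hg.
  assert (Hg0 : 0 < g).
  { assert (0 <= g) by apply Z.gcd_nonneg.
    enough (g <> 0) by lia. intros E. apply Z.gcd_eq_0_l in E. lia. }
  destruct (Z.gcd_divide_l (p ^ j) k) as [d Ed]. fold g in Ed.
  exists d. split; [nia|split]; intros h.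
  - rewrite divide_mul_iff_div_gcd, Hg by lia.
    rewrite Hpj1, Ed, Z.mul_assoc, Z.div_mul by lia. reflexivity.
  - rewrite divide_mul_iff_div_gcd by lia. fold g. rewrite Ed at 1. now rewrite Z.div_mul by lia.
Qed.

End NumberTheory.

Definition in_Hset (N h : Z) : bool :=
  andb (Z.ltb (- N) (2 * h)) (andb (Z.leb (2 * h) N) (negb (Z.eqb h 0))).

Lemma Hset_filter (N : Z) : Hset N = filter (in_Hset N) (Zrange (- N) N).
Proof. reflexivity. Qed.

Lemma in_Hset_pos (N i : nat) : (0 < i)%nat ->
  in_Hset (Z.of_nat N) (Z.of_nat i) = (2 * i <=? N)%nat.
Proof.
  intros Hi. unfold in_Hset.
  destruct (Z.ltb_spec (- Z.of_nat N) (2 * Z.of_nat i)),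
    (Z.leb_spec (2 * Z.of_nat i) (Z.of_nat N)),
    (Z.eqb_spec (Z.of_nat i) 0), (Nat.leb_spec (2 * i) N); simpl; auto; lia.
Qed.

Lemma in_Hset_neg (N i : nat) : (0 < i)%nat ->
  in_Hset (Z.of_nat N) (- Z.of_nat i) = (2 * i <? N)%nat.
Proof.
  intros Hi. unfold in_Hset.
  destruct (Z.ltb_spec (- Z.of_nat N) (2 * - Z.of_nat i)),
    (Z.leb_spec (2 * - Z.of_nat i) (Z.of_nat N)),
    (Z.eqb_spec (- Z.of_nat i) 0), (Nat.ltb_spec (2 * i) N); simpl; auto; lia.
Qed.

Lemma Rinv_IZR_abs_nonneg (h : Z) : 0 <= / IZR (Z.abs h).
Proof.
  destruct (Z.eq_dec h 0) as [->|Hh].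
  - simpl. rewrite Rinv_0. lra.
  - apply Rlt_le, Rinv_0_lt_compat, IZR_lt. lia.
Qed.

Lemma S_N_nonneg (N : Z) : 0 <= S_N N.
Proof. apply fsum_nonneg. intros h _. apply Rinv_IZR_abs_nonneg. Qed.

Definition harmonic_multiples (N d : Z) : R :=
  fsum (Hset N) (fun h => if Zdivide_dec d h then / IZR (Z.abs h) else 0).

(* For [x >= 1], the number of elements of [{x, -x}] lying in [Hset N]. *)
Definition Hset_pair (N x : nat) : R :=
  (if (2 * x <=? N)%nat then 1 else 0) + (if (2 * x <? N)%nat then 1 else 0).

Lemma Hset_pair_antitone (N x x' : nat) : (x <= x')%nat -> Hset_pair N x' <= Hset_pair N x.
Proof.
  intros H. unfold Hset_pair.
  destruct (Nat.leb_spec (2 * x) N), (Nat.ltb_spec (2 * x) N),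
    (Nat.leb_spec (2 * x') N), (Nat.ltb_spec (2 * x') N); lra || lia.
Qed.

Lemma harmonic_multiples_pairs (N d : nat) :
  harmonic_multiples (Z.of_nat N) (Z.of_nat d)
  = fsum (seq 1 N)
      (fun i => if Zdivide_dec (Z.of_nat d) (Z.of_nat i) then Hset_pair N i / INR i else 0).
Proof.
  unfold harmonic_multiples. rewrite Hset_filter, fsum_filter, fsum_Zrange_sym.
  change (@zero R_AbelianMonoid) with 0.
  replace (in_Hset (Z.of_nat N) 0) with false by (unfold in_Hset; now rewrite !Bool.andb_false_r).
  rewrite Rplus_0_l. apply fsum_ext. intros i Hi. apply in_seq in Hi.
  rewrite in_Hset_pos, in_Hset_neg, Z.abs_opp, Z.abs_eq, <- INR_IZR_INZ by lia.
  destruct (Zdivide_dec (Z.of_nat d) (Z.of_nat i)) as [Hdi|Hdi];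
    destruct (Zdivide_dec (Z.of_nat d) (- Z.of_nat i)) as [Hdi'|Hdi'].
  - unfold Hset_pair. destruct (2 * i <=? N)%nat, (2 * i <? N)%nat; cbv beta iota; lra.
  - exfalso. now apply Hdi', Z.divide_opp_r.
  - exfalso. now apply Hdi, Z.divide_opp_r.
  - destruct (2 * i <=? N)%nat, (2 * i <? N)%nat; cbv beta iota; lra.
Qed.

Lemma INR_mul_harmonic_multiples (N d : nat) : (0 < d)%nat ->
  INR d * harmonic_multiples (Z.of_nat N) (Z.of_nat d)
  = fsum (seq 1 N) (fun y => Hset_pair N (d * y) / INR y).
Proof.
  intros Hd. rewrite harmonic_multiples_pairs.
  rewrite <- (fsum_seq1_extend N (d * N)); [| nia |].
  2:{ intros i Hi. destruct (Zdivide_dec _ _); [|reflexivity].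
      unfold Hset_pair. destruct (Nat.leb_spec (2 * i) N), (Nat.ltb_spec (2 * i) N); try lia.
      change ((0 + 0) / INR i = 0). unfold Rdiv. ring. }
  rewrite (fsum_seq1_multiples (G := R_AbelianMonoid)) by exact Hd.
  rewrite <- fsum_Rmult_l. apply fsum_Rext. intros y Hy. apply in_seq in Hy.
  rewrite mult_INR. field. split; apply not_0_INR; lia.
Qed.

Lemma harmonic_multiples_antitone (N d c : nat) : (0 < d)%nat -> (0 < c)%nat ->
  INR c * harmonic_multiples (Z.of_nat N) (Z.of_nat (c * d))
  <= harmonic_multiples (Z.of_nat N) (Z.of_nat d).
Proof.
  intros Hd Hc. assert (Hdr : 0 < INR d) by (apply lt_0_INR; lia).
  apply (Rmult_le_reg_l (INR d)); [exact Hdr|].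
  replace (INR d * (INR c * harmonic_multiples (Z.of_nat N) (Z.of_nat (c * d))))
    with (INR (c * d) * harmonic_multiples (Z.of_nat N) (Z.of_nat (c * d)))
    by (rewrite mult_INR; ring).
  rewrite !INR_mul_harmonic_multiples by lia.
  apply fsum_le. intros y Hy. apply in_seq in Hy.
  apply Rmult_le_compat_r.
  - apply Rlt_le, Rinv_0_lt_compat, lt_0_INR. lia.
  - apply Hset_pair_antitone. nia.
Qed.

(* Ramanujan's sum [c_M(n)] for a prime power [M = p M'], [M' = M / p]. *)
Definition ramanujan_pp (M M' n : Z) : R :=
  (if Zdivide_dec M n then IZR M else 0) - (if Zdivide_dec M' n then IZR M' else 0).

Section SmallW.

Variables b m w : nat.
Hypothesis hb : prime (Z.of_nat b).
Hypothesis hwm : (w < m)%nat.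

Let N : nat := b ^ m.
Let M : nat := b ^ (m - w).
Let M' : nat := b ^ (m - w - 1).

Lemma M_eq : M = (b * M')%nat.
Proof. unfold M, M'. replace (m - w)%nat with (S (m - w - 1)) at 1 by lia. reflexivity. Qed.

Lemma N_eq : N = (M * b ^ w)%nat.
Proof. unfold N, M. rewrite <- Nat.pow_add_r. f_equal. lia. Qed.

Lemma M'_pos : (0 < M')%nat.
Proof. assert (H2 := prime_ge_2 _ hb). unfold M'. apply Nat.neq_0_lt_0, Nat.pow_nonzero. lia. Qed.

Lemma M_pos : (0 < M)%nat.
Proof. assert (H2 := prime_ge_2 _ hb). rewrite M_eq. assert (H := M'_pos). nia. Qed.

Lemma N_pos : (0 < N)%nat.
Proof. assert (H2 := prime_ge_2 _ hb). unfold N. apply Nat.neq_0_lt_0, Nat.pow_nonzero. lia. Qed.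

Lemma sum_Zset_cexp (n : Z) :
  fsum (Zset b m w) (fun z => cexp (2 * PI * IZR (n * z) / IZR (Z.of_nat M)))
  = RtoC (ramanujan_pp (Z.of_nat M) (Z.of_nat M') n).
Proof.
  assert (H2 := prime_ge_2 _ hb). assert (HM := M_eq). assert (HM' := M'_pos).
  set (e := fun i : nat => cexp (2 * PI * IZR (n * Z.of_nat i) / IZR (Z.of_nat M))).
  unfold Zset. rewrite (proj2 (Nat.ltb_lt _ _) hwm), fsum_filter.
  fold M. replace (Z.of_nat M - 1)%Z with (Z.of_nat (M - 1)) by lia.
  rewrite Zrange_1, fsum_map.
  rewrite (fsum_ext _ _
    (fun i => minus (e i) (if Zdivide_dec (Z.of_nat b) (Z.of_nat i) then e i else zero))).
  2:{ intros i _. rewrite Nat2Z.inj_pow. destruct (Zdivide_dec _ _) as [Hbi|Hbi].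
      - replace (_ =? 1)%Z with false.
        + symmetry. apply (minus_eq_zero (G := C_AbelianGroup)).
        + symmetry. apply Z.eqb_neq. rewrite gcd_prime_pow_eq_1 by (exact hb || lia). tauto.
      - replace (_ =? 1)%Z with true.
        + symmetry. apply (minus_zero_r (G := C_AbelianGroup)).
        + symmetry. apply Z.eqb_eq, gcd_prime_pow_eq_1; [exact hb | lia | exact Hbi]. }
  rewrite <- (fsum_seq1_extend (M - 1) M); [| lia |].
  2:{ intros i Hi. replace i with M by lia. destruct (Zdivide_dec _ _) as [_|Hnd].
      - apply (minus_eq_zero (G := C_AbelianGroup)).
      - exfalso. apply Hnd. exists (Z.of_nat M'). lia. }
  rewrite fsum_minus. rewrite HM at 2. rewrite fsum_seq1_multiples by lia.
  rewrite (fsum_ext _ (fun y => e (b * y)%nat)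
             (fun y => cexp (2 * PI * IZR (n * Z.of_nat y) / IZR (Z.of_nat M')))).
  2:{ intros y _. unfold e. f_equal. rewrite HM, !Nat2Z.inj_mul, !mult_IZR.
      field. split; apply not_0_IZR; lia. }
  unfold e. rewrite !sum_roots_of_unity; try lia; try apply Z.divide_refl.
  unfold ramanujan_pp. rewrite !INR_IZR_INZ.
  destruct (Zdivide_dec (Z.of_nat M) n), (Zdivide_dec (Z.of_nat M') n);
    change (@minus C_AbelianGroup ?x ?y) with (Cminus x y); rewrite <- RtoC_minus; f_equal; ring.
Qed.

Lemma length_Zset : INR (length (Zset b m w)) = IZR (Z.of_nat M) - IZR (Z.of_nat M').
Proof.
  assert (HM := M_eq). assert (HM' := M'_pos).
  assert (H := sum_Zset_cexp 0).
  rewrite (fsum_ext _ _ (fun _ => RtoC 1)), fsum_RtoC, fsum_const, Rmult_1_r in H.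
  - apply RtoC_inj in H. rewrite H. unfold ramanujan_pp.
    destruct (Zdivide_dec (Z.of_nat M) 0) as [|Hn]; [|exfalso; apply Hn, Z.divide_0_r].
    destruct (Zdivide_dec (Z.of_nat M') 0) as [|Hn]; [reflexivity|exfalso; apply Hn, Z.divide_0_r].
  - intros z _. rewrite <- (cexp_2PI_int 0). f_equal. simpl. unfold Rdiv. ring.
Qed.

Definition T_ramanujan (k : Z) : R :=
  fsum (Hset (Z.of_nat N))
    (fun h => ramanujan_pp (Z.of_nat M) (Z.of_nat M') (h * k) / IZR (Z.abs h)).

Lemma T_eq_ramanujan (k : Z) : T b m w k = RtoC (T_ramanujan k).
Proof.
  assert (H2 := prime_ge_2 _ hb). assert (HN := N_eq). assert (HM := M_pos).
  unfold T. cbv zeta. change lsumC with (@fsum Z C_AbelianMonoid).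
  rewrite (fsum_ext _ _ (fun z => fsum (Hset (Z.of_nat N)) (fun h =>
    Cmult (cexp (2 * PI * IZR ((h * k) * z) / IZR (Z.of_nat M))) (RtoC (/ IZR (Z.abs h)))))).
  2:{ intros z _. apply fsum_ext. intros h _. do 2 f_equal.
      assert (0 < b ^ w)%nat by (apply Nat.neq_0_lt_0, Nat.pow_nonzero; lia).
      fold N. rewrite HN, !Nat2Z.inj_mul, !mult_IZR. field. split; apply not_0_IZR; lia. }
  rewrite fsum_swap. unfold T_ramanujan. rewrite <- fsum_RtoC. apply fsum_ext. intros h _.
  rewrite fsum_Cmult_r, sum_Zset_cexp. unfold Rdiv. now rewrite RtoC_mult.
Qed.

Lemma T_ramanujan_multiple (k : Z) : (Z.of_nat M | k)%Z ->
  T_ramanujan k = (IZR (Z.of_nat M) - IZR (Z.of_nat M')) * S_N (Z.of_nat N).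
Proof.
  intros Hk. assert (HM := M_eq).
  unfold T_ramanujan, S_N. change lsumR with (@fsum Z R_AbelianMonoid).
  rewrite <- fsum_Rmult_l. apply fsum_ext. intros h _.
  unfold ramanujan_pp.
  destruct (Zdivide_dec (Z.of_nat M) (h * k)) as [|Hn]; [|exfalso; now apply Hn, Z.divide_mul_r].
  destruct (Zdivide_dec (Z.of_nat M') (h * k)) as [|Hn]; [reflexivity|exfalso].
  apply Hn, Z.divide_mul_r, (Z.divide_trans _ (Z.of_nat M)); [|exact Hk].
  exists (Z.of_nat b). lia.
Qed.

Lemma T_ramanujan_nonpos (k : Z) : ~ (Z.of_nat M | k)%Z -> T_ramanujan k <= 0.
Proof.
  intros Hk. assert (H2 := prime_ge_2 _ hb). assert (HM' := M'_pos).
  set (p := Z.of_nat b). set (j := Z.of_nat (m - w - 1)).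
  assert (EM' : Z.of_nat M' = (p ^ j)%Z) by (unfold M', p, j; apply Nat2Z.inj_pow).
  assert (EM : Z.of_nat M = (p ^ (j + 1))%Z).
  { rewrite Z.pow_add_r, Z.pow_1_r, <- EM' by lia. unfold p. rewrite M_eq. lia. }
  rewrite EM in Hk.
  destruct (divide_mul_prime_pow p j k hb ltac:(lia) Hk) as (d & Hd & Hdiv & Hdiv').
  rewrite <- EM in Hdiv. rewrite <- EM' in Hdiv'.
  assert (EMr : IZR (Z.of_nat M) = IZR p * IZR (Z.of_nat M'))
    by (rewrite <- mult_IZR, EM, EM', Z.pow_add_r, Z.pow_1_r by lia; f_equal; ring).
  assert (E : T_ramanujan k = IZR (Z.of_nat M') *
      (IZR p * harmonic_multiples (Z.of_nat N) (p * d) - harmonic_multiples (Z.of_nat N) d)).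
  { unfold T_ramanujan, harmonic_multiples.
    rewrite <- fsum_Rmult_l, <- fsum_Rminus, <- fsum_Rmult_l.
    apply fsum_Rext. intros h _. unfold ramanujan_pp.
    rewrite EMr.
    destruct (Zdivide_dec (Z.of_nat M) (h * k)) as [H1|H1], (Zdivide_dec (p * d) h) as [H3|H3];
      rewrite Hdiv in H1; try tauto;
      destruct (Zdivide_dec (Z.of_nat M') (h * k)) as [H5|H5], (Zdivide_dec d h) as [H6|H6];
      rewrite Hdiv' in H5; try tauto; unfold Rdiv; ring. }
  rewrite E. apply Rmult_le_0_l; [apply IZR_le; lia|].
  replace d with (Z.of_nat (Z.to_nat d)) by lia. unfold p.
  rewrite <- Nat2Z.inj_mul, <- INR_IZR_INZ.
  apply Rle_minus, harmonic_multiples_antitone; lia.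
Qed.

Lemma sum_T_ramanujan_nonneg : 0 <= fsum (seq 1 N) (fun k => T_ramanujan (Z.of_nat k)).
Proof.
  assert (HN := N_pos).
  set (K := Z.of_nat (b ^ w)).
  assert (E : RtoC (fsum (seq 1 N) (fun k => T_ramanujan (Z.of_nat k)))
    = RtoC (fsum (Zset b m w) (fun z => fsum (Hset (Z.of_nat N)) (fun h =>
        (if Zdivide_dec (Z.of_nat N) (h * K * z) then INR N else 0) / IZR (Z.abs h))))).
  { rewrite <- !fsum_RtoC, (fsum_ext _ _ (fun k => T b m w (Z.of_nat k)))
      by (intros; now rewrite T_eq_ramanujan).
    unfold T. cbv zeta. change lsumC with (@fsum Z C_AbelianMonoid).
    rewrite fsum_swap. apply fsum_ext. intros z _.
    rewrite <- fsum_RtoC, fsum_swap. apply fsum_ext. intros h _.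
    rewrite fsum_Cmult_r,
      (fsum_ext _ _ (fun k => cexp (2 * PI * IZR (h * K * z * Z.of_nat k) / IZR (Z.of_nat N)))).
    2:{ intros k _. do 4 f_equal. unfold K. ring. }
    rewrite sum_roots_of_unity by (lia || apply Z.divide_refl).
    unfold Rdiv. destruct (Zdivide_dec _ _); now rewrite RtoC_mult. }
  apply RtoC_inj in E. rewrite E.
  apply fsum_nonneg. intros z _. apply fsum_nonneg. intros h _.
  apply Rmult_le_pos.
  - destruct (Zdivide_dec _ _); [apply pos_INR | lra].
  - apply Rinv_IZR_abs_nonneg.
Qed.

Lemma sum_abs_T_ramanujan_le :
  fsum (seq 1 N) (fun k => Rabs (T_ramanujan (Z.of_nat k)))
  <= 2 * INR (b ^ w) * ((IZR (Z.of_nat M) - IZR (Z.of_nat M')) * S_N (Z.of_nat N)).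
Proof.
  assert (H2 := prime_ge_2 _ hb). assert (HM := M_eq). assert (HMpos := M_pos).
  set (A := (IZR (Z.of_nat M) - IZR (Z.of_nat M')) * S_N (Z.of_nat N)).
  assert (HA : 0 <= A).
  { apply Rmult_le_pos; [|apply S_N_nonneg].
    assert (IZR (Z.of_nat M') <= IZR (Z.of_nat M)) by (apply IZR_le; nia). lra. }
  (* [|x| = 2 x - x] at the multiples of [M], where [T_ramanujan >= 0], and [-x] elsewhere. *)
  rewrite (fsum_ext _ _ (fun k => 2 * (if Zdivide_dec (Z.of_nat M) (Z.of_nat k)
                                       then T_ramanujan (Z.of_nat k) else 0)
                                  - T_ramanujan (Z.of_nat k))).
  2:{ intros k _. destruct (Zdivide_dec _ _) as [Hk|Hk].
      - rewrite T_ramanujan_multiple by exact Hk. fold A. rewrite Rabs_pos_eq; lra.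
      - assert (T_ramanujan (Z.of_nat k) <= 0) by now apply T_ramanujan_nonpos.
        rewrite Rabs_left1; lra. }
  rewrite fsum_Rminus, fsum_Rmult_l.
  assert (Hsum := sum_T_ramanujan_nonneg). rewrite N_eq in Hsum |- *.
  rewrite (fsum_seq1_multiples (G := R_AbelianMonoid)) by exact HMpos.
  rewrite (fsum_ext _ _ (fun _ => A)), fsum_const, length_seq.
  - lra.
  - intros y _. apply T_ramanujan_multiple. exists (Z.of_nat y). lia.
Qed.

Lemma lemma1_small_w :
  lsumR (Zrange 1 (Z.of_nat (b ^ m) - 1))
        (fun k => Cmod (T b m w k) / INR (length (Zset b m w)))
  <= 2 * INR (b ^ w) * S_N (Z.of_nat (b ^ m)).
Proof.
  assert (H2 := prime_ge_2 _ hb). assert (HN := N_pos). assert (HM := M_eq). assert (HM' := M'_pos).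
  set (L := INR (length (Zset b m w))).
  assert (HL : 0 < L) by (unfold L; rewrite length_Zset; apply Rlt_0_minus, IZR_lt; nia).
  assert (Hbound := sum_abs_T_ramanujan_le). rewrite <- length_Zset in Hbound. fold L in Hbound.
  change lsumR with (@fsum Z R_AbelianMonoid).
  fold N. replace (Z.of_nat N - 1)%Z with (Z.of_nat (N - 1)) by lia.
  rewrite Zrange_1, fsum_map,
    (fsum_Rext _ _ (fun k => / L * Rabs (T_ramanujan (Z.of_nat k))))
    by (intros; rewrite T_eq_ramanujan, Cmod_R; unfold Rdiv; ring).
  rewrite fsum_Rmult_l.
  assert (Hdrop : fsum (seq 1 (N - 1)) (fun k => Rabs (T_ramanujan (Z.of_nat k)))
                  <= fsum (seq 1 N) (fun k => Rabs (T_ramanujan (Z.of_nat k)))).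
  { replace N with (S (N - 1)) at 2 by lia.
    rewrite (fsum_seq1_succ (G := R_AbelianMonoid)).
    change (@plus R_AbelianMonoid ?x ?y) with (x + y).
    assert (H := Rabs_pos (T_ramanujan (Z.of_nat (S (N - 1))))). lra. }
  apply Rle_trans with (/ L * (2 * INR (b ^ w) * (L * S_N (Z.of_nat N)))).
  - apply Rmult_le_compat_l; [apply Rlt_le, Rinv_0_lt_compat, HL | lra].
  - right. field. lra.
Qed.

End SmallW.

Lemma T_large_w (b m w : nat) (k : Z) : (m <= w)%nat -> (0 < b)%nat ->
  T b m w k = RtoC (S_N (Z.of_nat (b ^ m))).
Proof.
  intros Hw Hb. unfold T, S_N. cbv zeta.
  change lsumC with (@fsum Z C_AbelianMonoid). change lsumR with (@fsum Z R_AbelianMonoid).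
  unfold Zset. rewrite (proj2 (Nat.ltb_ge _ _) Hw).
  change (fsum [1%Z] ?f) with (f 1%Z + RtoC 0)%C. rewrite Cplus_0_r.
  rewrite <- fsum_RtoC. apply fsum_ext. intros h _.
  replace (2 * PI * IZR (h * k * Z.of_nat (b ^ w) * 1) / IZR (Z.of_nat (b ^ m)))
    with (2 * PI * IZR (h * k * Z.of_nat (b ^ (w - m)))).
  - rewrite cexp_2PI_int. apply Cmult_1_l.
  - replace (b ^ w)%nat with (b ^ m * b ^ (w - m))%nat by (rewrite <- Nat.pow_add_r; f_equal; lia).
    assert (0 < b ^ m)%nat by (apply Nat.neq_0_lt_0, Nat.pow_nonzero; lia).
    rewrite Nat2Z.inj_mul, !mult_IZR. field. apply not_0_IZR. lia.
Qed.

Lemma lemma1_large_w (b m w : nat) : (m <= w)%nat -> (0 < b)%nat ->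
  lsumR (Zrange 1 (Z.of_nat (b ^ m) - 1))
        (fun k => Cmod (T b m w k) / INR (length (Zset b m w)))
  <= 2 * INR (b ^ m) * S_N (Z.of_nat (b ^ m)).
Proof.
  intros Hw Hb. assert (HN : (0 < b ^ m)%nat) by (apply Nat.neq_0_lt_0, Nat.pow_nonzero; lia).
  assert (HS := S_N_nonneg (Z.of_nat (b ^ m))).
  replace (length (Zset b m w)) with 1%nat
    by (unfold Zset; now rewrite (proj2 (Nat.ltb_ge _ _) Hw)).
  change lsumR with (@fsum Z R_AbelianMonoid).
  replace (Z.of_nat (b ^ m) - 1)%Z with (Z.of_nat (b ^ m - 1)) by lia.
  rewrite Zrange_1, fsum_map,
    (fsum_Rext _ _ (fun _ => S_N (Z.of_nat (b ^ m)))).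
  - rewrite fsum_const, length_seq, minus_INR by lia. simpl INR.
    apply Rmult_le_compat_r; [exact HS|]. assert (H := pos_INR (b ^ m)). lra.
  - intros k _. rewrite T_large_w, Cmod_R, Rabs_pos_eq by lia || exact HS. simpl. field.
Qed.

Theorem lemma1 (b m w : nat) (hb : prime (Z.of_nat b)) (hm : (0 < m)%nat) :
  lsumR (Zrange 1 (Z.of_nat (b ^ m) - 1))
        (fun k => Cmod (T b m w k) / INR (length (Zset b m w)))
  <= 2 * INR (b ^ Nat.min w m) * S_N (Z.of_nat (b ^ m)).
Proof.
  destruct (Nat.lt_ge_cases w m) as [Hw|Hw].
  - rewrite Nat.min_l by lia. now apply lemma1_small_w.
  - rewrite Nat.min_r by lia. apply lemma1_large_w; [exact Hw|].
    apply prime_ge_2 in hb. lia.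
Qed.
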